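(* In the setting of the context, for every compact set $B\subset\mathrm{G}/\Gamma_i$ there exists $C<0$ such that whenever $k\in\mathrm{K}$, $a\in\mathrm{A}^+_{\mathrm{M}_{\mathscr{I}_0}}$, $b\in\mathrm{A}_{\mathscr{I}_0}$ and $\log a+\log b\notin\mathcal{C}_C$, the image of $kabG_{\mathrm{hor}}$ in $\mathrm{G}/\Gamma_i$ does not meet $B$.
   Context: $N\ge2$, $\mathrm{G}=\mathrm{SL}_N(\mathbb{R})$, $\mathrm{K}=\mathrm{SO}_N(\mathbb{R})$. $\mathscr{I}_0=\{I_1,\dots,I_{k_0}\}$: partition of $\{1,\dots,N\}$ into nonempty consecutive blocks; $i\sim j$ iff same block. $\mathrm{U}_{\mathscr{I}_0}:=\{g:(\mathrm{id}-g)\mathbb{R}^{I_k}\subset\mathbb{R}^{I_1\cup\dots\cup I_{k-1}}\forall k\}$, $G_{\mathrm{hor}}$ the stabilizer of $\mathrm{U}_{\mathscr{I}_0}\mathrm{K}/\mathrm{K}$ in $\mathrm{G}$. $\Gamma$: lattice commensurable with $\mathrm{SL}_N(\mathbb{Z})$, $\Gamma'\le\Gamma$ neat of finite index, $q_i\in\Gamma$, $\Gamma_i:=q_i^{-1}\Gamma'q_i$. $\mathrm{A}_{\mathscr{I}_0}$: positive diagonal determinant-1 matrices constant on blocks. $\mathrm{A}^+_{\mathrm{M}_{\mathscr{I}_0}}$: positive diagonal $a$ with $\prod_{i\in I_k}a_i=1$ for all $k$ and $a_i\ge a_j$ for $i<j$, $i\sim j$. For $C\in\mathbb{R}$, $\mathcal{C}_C$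 is the set of traceless real diagonal $\mathrm{diag}(x_1,\dots,x_N)$ with $x_i-x_j\ge\max\{0,C\}$ whenever $i<j$ lie in the same block, and $\sum_{i\in I_1\cup\dots\cup I_k}x_i\ge C$ for all $1\le k<k_0$. *)

From HB Require Import structures.
From mathcomp Require Import all_boot all_order all_algebra.
From mathcomp Require Import all_classical all_reals all_analysis.
From mathcomp Require Import finmap complex.
Set Implicit Arguments. Unset Strict Implicit. Unset Printing Implicit Defensive.
Import Order.TTheory GRing.Theory Num.Theory.
Import numFieldTopology.Exports.
Local Open Scope classical_set_scope.
Local Open Scope ring_scope.

Section Defs.
Context {R : realType} {N : nat}.
Notation M := ('M[R]_N).

Definition SLN : set M := [set g | \det g = 1].
Definition SON : set M := [set k | k^T *m k = 1%:M /\ \det k = 1].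
Definition SLNZ : set M :=
  [set g | \det g = 1 /\ forall i j, g i j \is a Num.int].

Definition is_subgroup (H : set M) : Prop :=
  H `<=` SLN /\ H 1%:M /\
  (forall x y, H x -> H y -> H (x *m y)) /\
  (forall x, H x -> H (invmx x)).

Definition finite_index (H L : set M) : Prop :=
  exists s : seq M, (forall t, t \in s -> L t) /\
    forall g, L g -> exists2 t, t \in s & H (invmx t *m g).

Definition commensurable_SLNZ (Gam : set M) : Prop :=
  finite_index (Gam `&` SLNZ) Gam /\ finite_index (Gam `&` SLNZ) SLNZ.

Definition eigenvalue_C (g : M) (z : R[i]) : Prop :=
  root (char_poly (map_mx (fun x : R => (x%:C)%C) g)) z.

Definition neat (H : set M) : Prop :=
  forall g, H g ->
  forall s : seq (R[i] * int), (forall p, p \in s -> eigenvalue_C g p.1) ->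
  let z := \prod_(p <- s) (p.1 ^ p.2) in
  (exists m : nat, (0 < m)%N /\ z ^+ m = 1) -> z = 1.

Definition conj_sub (H : set M) (q : M) : set M :=
  [set g | exists h, H h /\ g = invmx q *m h *m q].

(* A subset of G/Gam is represented by its preimage B in G (a right
   Gam-invariant subset of G).  Compactness in the quotient topology:
   open subsets of G/Gam correspond to Gam-saturated relatively open
   subsets O `&` G of G, O open in M_N(R). *)
Definition quot_compact (Gam : set M) (B : set M) : Prop :=
  B `<=` SLN /\
  (forall x g, B x -> Gam g -> B (x *m g)) /\
  forall (I : choiceType) (O : I -> set M),
    (forall i, open (O i)) ->
    (forall i x g, SLN x -> Gam g -> O i x -> O i (x *m g)) ->
    B `<=` \bigcup_i O i ->
    exists D : {fset I}, B `<=` \bigcup_(i in [set` D]) O i.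

(* Partition of {0..N-1} into nonempty consecutive blocks, given by the
   block index function blk (block I_{k+1} = blk^-1(k)). *)
Definition consecutive_blocks (blk : 'I_N -> nat) : Prop :=
  (forall i : 'I_N, nat_of_ord i = 0%N -> blk i = 0%N) /\
  (forall i j : 'I_N, (i <= j)%N -> (blk i <= blk j <= blk i + (j - i))%N).

Definition nblocks (blk : 'I_N -> nat) : nat := (\max_(i : 'I_N) blk i).+1.

Definition is_diag (a : M) : Prop := forall i j, i != j -> a i j = 0.

Definition U_I (blk : 'I_N -> nat) : set M :=
  [set g | SLN g /\ forall i j, (blk j <= blk i)%N -> g i j = (i == j)%:R].

Definition UK (blk : 'I_N -> nat) : set M :=
  [set x | exists u k, U_I blk u /\ SON k /\ x = u *m k].

(* G_hor : stabilizer in G of U K / K (for the left action on G/K),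
   i.e. h U K = U K *)
Definition G_hor (blk : 'I_N -> nat) : set M :=
  [set h | SLN h /\ [set x | exists y, UK blk y /\ x = h *m y] = UK blk].

Definition A_I (blk : 'I_N -> nat) : set M :=
  [set b | is_diag b /\ (forall i, 0 < b i i) /\ \det b = 1 /\
           forall i j, blk i = blk j -> b i i = b j j].

Definition Aplus_M (blk : 'I_N -> nat) : set M :=
  [set a | is_diag a /\ (forall i, 0 < a i i) /\
           (forall k : nat, \prod_(i : 'I_N | blk i == k) a i i = 1) /\
           forall i j : 'I_N, (i < j)%N -> blk i = blk j -> a j j <= a i i].

Definition diag_log (a : M) : M := \matrix_(i, j) (if i == j then ln (a i i) else 0).

Definition cone_C (blk : 'I_N -> nat) (C : R) : set M :=
  [set X | is_diag X /\ \tr X = 0 /\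
     (forall i j : 'I_N, (i < j)%N -> blk i = blk j ->
        Num.max 0 C <= X i i - X j j) /\
     (forall k : nat, (1 <= k < nblocks blk)%N ->
        C <= \sum_(i : 'I_N | (blk i < k)%N) X i i)].

End Defs.

From HB Require Import structures.
From mathcomp Require Import all_boot all_order all_algebra.
From mathcomp Require Import all_classical all_reals all_analysis.
From mathcomp Require Import finmap complex.
From mathcomp Require Import fingroup perm.
From mathcomp Require Import zify ring lra.
Import Order.TTheory GRing.Theory Num.Theory.
Import numFieldTopology.Exports.
Local Open Scope classical_set_scope.
Local Open Scope ring_scope.
Set Implicit Arguments. Unset Strict Implicit. Unset Printing Implicit Defensive.

(* If [x = k a b h] lies in a compact subset of [G/Gamma_i], Mahler's
   criterion bounds the lattice [x Z^N] away from degeneration: for every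
   integral [V] of rank [d], some [d x d] minor of [x V] is at least a fixed
   [eps > 0].  If [log a + log b] is not in the cone [C_C], then (the other
   conditions holding automatically) some partial sum over the first blocks
   [I_1 .. I_k] is below [C]; let [d = |I_1| + .. + |I_k|] and [V] the first
   [d] coordinate vectors.  Every [h] in [G_hor] is [u k'] with [u] in [U] and
   [k'] orthogonal preserving the flag of block boundaries, so the minors of
   [x V] are at most [d! prod_{i<d} a_i b_i < N! e^C], which is below [eps]
   once [C] is negative enough. *)

Lemma sum_delta_mull (R : pzSemiRingType) n (F : 'I_n -> R) i :
  \sum_l (i == l)%:R * F l = F i.
Proof.
rewrite (bigD1 i) //= eqxx mul1r big1 ?addr0 // => l /negbTE.
by rewrite eq_sym => ->; rewrite mul0r.
Qed.

Lemma sum_delta_mulr (R : pzSemiRingType) n (F : 'I_n -> R) i :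
  \sum_l F l * (l == i)%:R = F i.
Proof.
rewrite (bigD1 i) //= eqxx mulr1 big1 ?addr0 // => l /negbTE ->.
by rewrite mulr0.
Qed.

Lemma mono_exists_seq (T : eqType) (P : nat -> T -> Prop) (s : seq T) :
  (forall n n' t, (n <= n')%N -> P n t -> P n' t) ->
  (forall t, t \in s -> exists n, P n t) -> exists n, forall t, t \in s -> P n t.
Proof.
move=> Pmono; elim: s => [|t s IH] Ps; first by exists 0%N.
have [|n1 Pn1] := IH; first by move=> u us; apply: Ps; rewrite inE us orbT.
have [n2 Pn2] := Ps t (mem_head t s).
exists (maxn n1 n2) => u; rewrite inE => /predU1P[->|us].
  exact: Pmono (leq_maxr _ _) Pn2.
exact: Pmono (leq_maxl _ _) (Pn1 u us).
Qed.

Lemma det_normr_le (R : numDomainType) n (A : 'M[R]_n) (m : R) :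
  (forall i j, `|A i j| <= m) -> `|\det A| <= n`!%:R * m ^+ n.
Proof.
move=> Am; rewrite /determinant; apply: le_trans (ler_norm_sum _ _ _) _.
rewrite mulr_natl -card_Sn -sumr_const; apply: ler_sum => s _.
rewrite normrM normrX normrN normr1 expr1n mul1r normr_prod.
rewrite -[X in m ^+ X](card_ord n) -prodr_const.
by apply: ler_prod => i _; rewrite normr_ge0 Am.
Qed.

Lemma det_mulmx_rowsub (R : comPzRingType) d n (A : 'M[R]_(d, n)) (B : 'M[R]_(n, d)) :
  \det (A *m B) =
  \sum_(f : {ffun 'I_d -> 'I_n}) (\prod_i A i (f i)) * \det (rowsub f B).
Proof.
rewrite /determinant.
under eq_bigr => s _.
  under eq_bigr => i _ do rewrite mxE.
  rewrite bigA_distr_bigA big_distrr /=.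
over.
rewrite exchange_big /=; apply: eq_bigr => f _.
rewrite big_distrr /=; apply: eq_bigr => s _.
rewrite mulrCA -big_split /=; congr (_ * _).
by apply: eq_bigr => i _; rewrite mxE.
Qed.

Lemma det_mxOver (R : comNzRingType) (S : subringClosed R) n (A : 'M[R]_n) :
  A \is a mxOver S -> \det A \in S.
Proof.
move=> /mxOverP AS; apply: rpred_sum => s _; apply: rpredM.
  by rewrite rpredX // rpredN rpred1.
by apply: rpred_prod => i _; apply: AS.
Qed.

Lemma orthomx_entry_le1 {R : realFieldType} {n : nat} (k : 'M[R]_n) :
  k^T *m k = 1%:M -> forall r c, `|k r c| <= 1.
Proof.
move=> kk r c; have : \sum_l k l c ^+ 2 = 1.
  have := congr1 (fun A : 'M[R]_n => A c c) kk; rewrite !mxE eqxx mulr1n => <-.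
  by apply: eq_bigr => l _; rewrite mxE expr2.
rewrite (bigD1 r) //= => e.
rewrite -(expr_le1 (n := 2)) ?normr_ge0 // real_normK ?num_real //.
by rewrite -e lerDl sumr_ge0 // => l _; rewrite sqr_ge0.
Qed.

Section MatrixNorm.
Context {R : realFieldType}.

Lemma mx_norm_entry_le {m n} (A : 'M[R]_(m, n)) i j : `|A i j| <= `|A|.
Proof. by rewrite [leRHS]/Num.Def.normr /= mx_normrE (le_bigmax _ _ (i, j)). Qed.

Lemma mx_norm_le {m n} (A : 'M[R]_(m, n)) c :
  0 <= c -> (forall i j, `|A i j| <= c) -> `|A| <= c.
Proof.
by move=> c0 Ac; rewrite [leLHS]/Num.Def.normr /= mx_normrE; apply: bigmax_le => // -[i j].
Qed.

Lemma mx_norm_mulmx_le {m n p} (A : 'M[R]_(m, n)) (B : 'M[R]_(n, p)) :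
  `|A *m B| <= n%:R * `|A| * `|B|.
Proof.
apply: mx_norm_le => [|i j]; first by rewrite !mulr_ge0.
rewrite mxE; apply: le_trans (ler_norm_sum _ _ _) _.
rewrite -mulrA mulr_natl -[X in _ *+ X](card_ord n) -sumr_const.
by apply: ler_sum => l _; rewrite normrM ler_pM ?mx_norm_entry_le.
Qed.

Lemma nbhs_mulmxr {m n p} (t : 'M[R]_(n, p)) (y : 'M[R]_(m, n)) (A : set 'M[R]_(m, p)) :
  nbhs (y *m t) A -> nbhs y [set z | A (z *m t)].
Proof.
move=> /nbhs_ballP[e e0 yA]; apply/nbhs_ballP.
have c0 : 0 < n%:R * `|t| + 1 by rewrite ltr_wpDl // mulr_ge0.
exists (e / (n%:R * `|t| + 1)); first exact: divr_gt0.
move=> z; rewrite mx_norm_ball /ball_ /= ltr_pdivlMr // => yz.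
apply: yA; rewrite mx_norm_ball /ball_ /= -mulmxBl.
apply: le_lt_trans (mx_norm_mulmx_le (y - z) t) _; apply: le_lt_trans yz.
have := normr_ge0 (y - z); have : 0 <= n%:R * `|t| by rewrite mulr_ge0.
nra.
Qed.

Lemma open_mulmxr {m n p} (t : 'M[R]_(n, p)) (A : set 'M[R]_(m, p)) :
  open A -> open [set y | A (y *m t)].
Proof. by rewrite !openE => oA y Ay; apply: nbhs_mulmxr; apply: oA. Qed.

Lemma open_mulmxr_seq {m n p} (s : seq 'M[R]_(n, p)) (A : set 'M[R]_(m, p)) :
  open A -> open [set y | forall t, t \in s -> A (y *m t)].
Proof.
move=> oA; elim: s => [|t s IH].
  suff -> : [set y | forall t, t \in [::] -> A ((y : 'M[R]_(m, n)) *m t)] = setT.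
    exact: openT.
  by rewrite predeqE => y; split => // _ t; rewrite in_nil.
suff -> : [set y | forall u, u \in t :: s -> A ((y : 'M[R]_(m, n)) *m u)] =
    [set y | A (y *m t)] `&` [set y | forall u, u \in s -> A (y *m u)].
  by apply: openI; [exact: open_mulmxr | exact: IH].
rewrite predeqE => y; split => [yA|[yAt yAs] u].
  by split => [|u us]; apply: yA; rewrite inE ?eqxx ?us ?orbT.
by rewrite inE => /predU1P[->|]; [exact: yAt | exact: yAs].
Qed.

End MatrixNorm.

Section MinorBounds.
Context {R : realType} {N : nat}.
Local Notation M := 'M[R]_N.

Definition nondeg {d} (V : 'M[R]_(N, d)) : Prop :=
  exists f : 'I_d -> 'I_N, \det (rowsub f V) != 0.

(* [z V] is a rank-[d] sublattice of [z Z^N], its largest minor measures its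
   covolume.  The guard [SLN z] makes the condition vacuous off SL_N, so that
   it can hold on open subsets of ['M_N]. *)
Definition minor_bounded (n : nat) : set M :=
  [set z | SLN z -> forall d, (d <= N)%N -> forall V : 'M[R]_(N, d),
     V \is a mxOver Num.int -> nondeg V ->
     exists f : 'I_d -> 'I_N, n.+1%:R^-1 <= `|\det (rowsub f (z *m V))|].

Lemma minor_bounded_le n n' : (n <= n')%N -> minor_bounded n `<=` minor_bounded n'.
Proof.
move=> nn' z zn zS d dN V Vint Vnd; have [f zVf] := zn zS d dN V Vint Vnd.
by exists f; apply: le_trans zVf; rewrite lef_pV2 ?posrE ?ltr0n // ler_nat.
Qed.

Lemma nondeg_mulmx {d} (D : M) (V : 'M[R]_(N, d)) :
  D \in unitmx -> nondeg V -> nondeg (D *m V).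
Proof.
move=> Du [f0 Vf0]; apply: contrapT => DVdeg; move: Vf0.
rewrite -[V](mulKmx Du) -mul_rowsub_mx det_mulmx_rowsub big1 ?eqxx // => f _.
suff -> : \det (rowsub f (D *m V)) = 0 by rewrite mulr0.
by apply/eqP; apply: contrapT => DVf; apply: DVdeg; exists f; apply/negP.
Qed.

Lemma minor_bounded_mulmxr n (D z : M) :
  D \is a mxOver Num.int -> \det D = 1 ->
  minor_bounded n z -> minor_bounded n (z *m D).
Proof.
move=> Dint D1 zn zDS d dN V Vint Vnd.
have zS : SLN z by move: zDS; rewrite /SLN /= det_mulmx D1 mulr1.
have Du : D \in unitmx by rewrite unitmxE D1 unitr1.
have [f zDVf] := zn zS d dN (D *m V) (mxOverM Dint Vint) (nondeg_mulmx Du Vnd).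
by exists f; rewrite -mulmxA.
Qed.

Lemma interior_minor_bounded_mulmxr n (D y : M) :
  D \is a mxOver Num.int -> \det D = 1 ->
  (minor_bounded n)° y -> (minor_bounded n)° (y *m D).
Proof.
move=> Dint D1 yn; have Du : D \in unitmx by rewrite unitmxE D1 unitr1.
have : nbhs (y *m D *m invmx D) (minor_bounded n) by rewrite mulmxK.
move/nbhs_mulmxr; apply: filterS => z /(minor_bounded_mulmxr Dint D1).
by rewrite mulmxKV.
Qed.

Lemma invmx_entry_le (z : M) (m : R) : \det z = 1 ->
  (forall i j, `|z i j| <= m) -> forall i j, `|invmx z i j| <= N.-1`!%:R * m ^+ N.-1.
Proof.
move=> z1 zm i j.
rewrite /invmx unitmxE z1 unitr1 invr1 scale1r !mxE /cofactor.
rewrite normrM normrX normrN normr1 expr1n mul1r.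
by apply: det_normr_le => p q; rewrite !mxE.
Qed.

(* Cauchy-Binet: a nonzero, hence [>= 1], integral minor of [V = z^-1 (z V)]
   expands into the minors of [z V], with coefficients products of entries of
   [z^-1]. *)
Lemma exists_large_minor {d} (z : M) (m : R) (V : 'M[R]_(N, d)) :
  z \in unitmx -> (forall i j, `|invmx z i j| <= m) ->
  V \is a mxOver Num.int -> nondeg V ->
  exists f : 'I_d -> 'I_N, 1 <= (N ^ d)%:R * m ^+ d * `|\det (rowsub f (z *m V))|.
Proof.
move=> zu zm Vint [f0 Vf0].
pose minor (f : {ffun 'I_d -> 'I_N}) := `|\det (rowsub f (z *m V))|.
have [f _ fmax] := @arg_maxP _ _ _ (finfun f0) xpredT minor isT.
exists f.
have Vf0_ge1 : 1 <= `|\det (rowsub f0 V)|.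
  apply: norm_intr_ge1 Vf0; apply: det_mxOver; apply/mxOverP => i j.
  by rewrite mxE; apply: (mxOverP Vint).
apply: le_trans Vf0_ge1 _.
have -> : rowsub f0 V = rowsub f0 (invmx z) *m (z *m V).
  by rewrite mul_rowsub_mx mulKmx.
rewrite det_mulmx_rowsub.
apply: le_trans (ler_norm_sum _ _ _) _.
have -> : (N ^ d)%:R * m ^+ d * minor f = \sum_(g : {ffun 'I_d -> 'I_N}) m ^+ d * minor f.
  by rewrite sumr_const card_ffun !card_ord -mulrA mulr_natl.
apply: ler_sum => g _; rewrite normrM; apply: ler_pM => //; last exact: fmax.
rewrite normr_prod -[X in m ^+ X](card_ord d) -prodr_const.
by apply: ler_prod => i _; rewrite normr_ge0 mxE zm.
Qed.

Lemma minor_bounded_nbhs (x : M) : exists n, nbhs x (minor_bounded n).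
Proof.
pose m := `|x| + 1; pose m' := N.-1`!%:R * m ^+ N.-1.
pose K := (N.+1%:R * (m' + 1)) ^+ N.
have m'0 : 0 <= m' by rewrite mulr_ge0 // exprn_ge0 // addr_ge0.
have K0 : 0 <= K by rewrite exprn_ge0 // mulr_ge0 // addr_ge0.
exists (Num.bound K); apply/nbhs_ballP; exists 1; first exact: ltr01.
move=> z; rewrite mx_norm_ball /ball_ /= => xz zS d dN V Vint Vnd.
have zm i j : `|z i j| <= m.
  have -> : z i j = x i j - (x - z) i j by rewrite !mxE opprB addrC subrK.
  apply: le_trans (ler_normB _ _) _; apply: lerD; first exact: mx_norm_entry_le.
  exact: le_trans (mx_norm_entry_le _ i j) (ltW xz).
have zu : z \in unitmx by rewrite unitmxE zS unitr1.
have [f zVf] := exists_large_minor zu (invmx_entry_le zS zm) Vint Vnd.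
exists f; rewrite -div1r ler_pdivrMr ?ltr0n //; apply: le_trans zVf _.
rewrite [leRHS]mulrC; apply: ler_wpM2r => //.
have NmK : (N ^ d)%:R * m' ^+ d <= K.
  have NK1 : 1 <= N.+1%:R * (m' + 1) by rewrite mulr_ege1 ?ler1n // lerDr.
  rewrite natrX -exprMn; apply: le_trans (ler_weXn2l NK1 dN).
  apply: lerXn2r; rewrite ?nnegrE ?(le_trans ler01 NK1) ?(mulr_ge0 (ler0n _ N) m'0) //.
  by apply: ler_pM; rewrite // ?lerDl ?ler_nat.
apply: le_trans NmK (ltW (lt_le_trans (archi_boundP K0) _)).
by rewrite ler_nat.
Qed.

(* Mahler's criterion, easy direction: a compact subset of [G/Gs] has no
   lattices with small sublattices.  Openness and [Gs]-invariance of the sets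
   [O n] come from right translates by the finitely many coset representatives
   of [Gam] modulo SL_N(Z), which preserve [minor_bounded n]. *)
Lemma quot_compact_minor_bounded (Gam Gs B : set M) :
  is_subgroup Gam -> finite_index (Gam `&` SLNZ) Gam -> Gs `<=` Gam ->
  quot_compact Gs B -> exists n, B `<=` minor_bounded n.
Proof.
move=> [GamS [Gam1 [Gammul _]]] [s [sGam sidx]] GsGam [_ [_ Bcpt]].
have SLNZ_int (D : M) : SLNZ D -> D \is a mxOver Num.int.
  by move=> [_ Dint]; apply/mxOverP.
pose O n := [set y : M | forall t, t \in s -> (minor_bounded n)° (y *m t)].
have Ole n n' : (n <= n')%N -> O n `<=` O n'.
  by move=> nn' y yO t ts; apply: filterS (minor_bounded_le nn') (yO t ts).
have Oopen n : open (O n) by apply: open_mulmxr_seq; exact: open_interior.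
have OGs n x g : SLN x -> Gs g -> O n x -> O n (x *m g).
  move=> _ gGs xO t ts.
  have [t' t's [_ t'gt]] := sidx _ (Gammul _ _ (GsGam _ gGs) (sGam _ ts)).
  have t'u : t' \in unitmx by rewrite unitmxE (GamS _ (sGam _ t's)) unitr1.
  have -> : x *m g *m t = x *m t' *m (invmx t' *m (g *m t)).
    by rewrite -[RHS]mulmxA mulKVmx // mulmxA.
  exact: interior_minor_bounded_mulmxr (SLNZ_int _ t'gt) (proj1 t'gt) (xO t' t's).
have BO : B `<=` \bigcup_n O n.
  move=> b _.
  have [k bk] := @mono_exists_seq _ (fun n t => (minor_bounded n)° (b *m t)) s
    (fun n n' t nn' => filterS (minor_bounded_le nn'))
    (fun t _ => minor_bounded_nbhs (b *m t)).
  by exists k.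
have [D BD] := Bcpt nat O Oopen OGs BO.
exists (\max_(i <- D) i) => b Bb; have [i Di bOi] := BD b Bb.
have [t0 t0s [_ t0int]] := sidx _ Gam1; rewrite mulmx1 in t0int.
have := interior_minor_bounded_mulmxr (SLNZ_int _ t0int) (proj1 t0int)
  (Ole _ _ (leq_bigmax_seq (F := id) i Di isT) _ bOi t0 t0s).
by rewrite mulmxK ?unitmxE ?(GamS _ (sGam _ t0s)) ?unitr1 //; exact: nbhs_singleton.
Qed.

End MinorBounds.

Section BlockUnipotent.
Context {R : realFieldType} {N : nat} (blk : 'I_N -> nat).
Local Notation M := 'M[R]_N.

Definition block_unipotent (v : M) :=
  forall i j, (blk j <= blk i)%N -> v i j = (i == j)%:R.

Lemma blk_down_ind (P : 'I_N -> Prop) :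
  (forall r, (forall s, (blk r < blk s)%N -> P s) -> P r) -> forall r, P r.
Proof.
move=> IH r; have blk_le s : (blk s <= \max_i blk i)%N by apply: leq_bigmax.
suff : forall n r, (\max_i blk i - blk r <= n)%N -> P r by apply; apply: leqnn.
elim=> [|n IHn] {}r rn; apply: IH => s rs.
  by have := blk_le s; lia.
by apply: IHn; have := blk_le s; lia.
Qed.

Lemma eq_blk_lt a b : (blk a < blk b)%N -> (b == a) = false.
Proof. by move=> ab; apply/eqP => ba; move: ab; rewrite ba ltnn. Qed.

Lemma mulmx_entry_block (x y : M) i j :
  (forall l, (blk l <= blk i)%N -> x i l = (i == l)%:R) ->
  (forall l, (blk i < blk l)%N -> y l j = 0) -> (x *m y) i j = y i j.
Proof.
move=> xi yj; rewrite mxE -[RHS](sum_delta_mull (fun l => y l j) i).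
apply: eq_bigr => l _.
case: (leqP (blk l) (blk i)) => [/xi -> // | il].
by rewrite yj // !mulr0.
Qed.

Lemma block_unipotent_mul u v :
  block_unipotent u -> block_unipotent v -> block_unipotent (u *m v).
Proof.
move=> uU vU i j ji; rewrite mulmx_entry_block => [|l|l il]; first exact: vU.
  exact: uU.
by rewrite vU ?(leq_trans ji (ltnW il)) ?eq_blk_lt ?(leq_ltn_trans ji il).
Qed.

Lemma block_unipotent_inv u :
  block_unipotent u -> u \in unitmx -> block_unipotent (invmx u).
Proof.
move=> uU uu; apply: blk_down_ind => i IH j ji.
rewrite -(mulmx_entry_block (x := u)) => [|l|l il]; first by rewrite mulmxV ?mxE.
  exact: uU.
by rewrite IH ?(leq_trans ji (ltnW il)) ?eq_blk_lt ?(leq_ltn_trans ji il).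
Qed.

Lemma block_unipotent_triu (v : M) :
  (forall i j : 'I_N, (i <= j)%N -> (blk i <= blk j)%N) ->
  block_unipotent v -> forall p q : 'I_N, (q <= p)%N -> v p q = (p == q)%:R.
Proof. by move=> blk_mono vU p q qp; apply/vU/blk_mono. Qed.

Lemma block_unipotent_gram_row (v : M) s :
  block_unipotent v -> (v *m v^T) s s = 1 -> forall l, v s l = (s == l)%:R.
Proof.
move=> vU vss l; case: (leqP (blk l) (blk s)) => [/vU // | sl].
have low : \sum_(l' | ~~ (blk s < blk l')%N) v s l' * v^T l' s = 1.
  rewrite (bigD1 s) ?ltnn //= big1 ?addr0 => [|l' /andP[sl' /negbTE ls]].
    by rewrite mxE vU ?eqxx ?mulr1.
  by rewrite mxE vU 1?eq_sym ?ls ?mul0r // leqNgt.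
have high : \sum_(l' | (blk s < blk l')%N) v s l' * v^T l' s = 0.
  move: vss; rewrite mxE (bigID (fun l' => (blk s < blk l')%N)) /= low.
  by move=> /(canRL (addrK 1)); rewrite subrr.
have sq_ge0 l' : (blk s < blk l')%N -> 0 <= v s l' * v^T l' s.
  by move=> _; rewrite mxE -expr2 sqr_ge0.
have := psumr_eq0P sq_ge0 high sl; rewrite mxE eq_sym (eq_blk_lt sl).
by move/eqP; rewrite mulf_eq0 orbb => /eqP.
Qed.

Lemma block_unipotent_gram_diag (v : M) r :
  block_unipotent v ->
  (forall s, (blk r < blk s)%N -> (v *m v^T) s s = 1 /\ (v *m v^T) r s = 0) ->
  (v *m v^T) r r = 1.
Proof.
move=> vU vs.
have vr l : v r l = (r == l)%:R.
  case: (leqP (blk l) (blk r)) => [/vU // | rl].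
  have [/(block_unipotent_gram_row vU) vl vrl] := vs l rl.
  transitivity ((v *m v^T) r l); last by rewrite vrl eq_sym eq_blk_lt.
  rewrite mxE -[LHS](sum_delta_mulr (v r) l).
  by apply: eq_bigr => l' _; rewrite mxE vl eq_sym.
rewrite mxE (eq_bigr (fun l => (r == l)%:R * (r == l)%:R)) => [|l _].
  by rewrite sum_delta_mull eqxx.
by rewrite mxE !vr.
Qed.

Lemma mulmx_elem_entry (k : M) i j (t : R) a l :
  (k *m (1%:M + t *: delta_mx i j)) a l = k a l + t * (k a i * (l == j)%:R).
Proof.
rewrite mxE; under eq_bigr do rewrite !mxE mulrDr.
rewrite big_split /= sum_delta_mulr; congr (_ + _).
rewrite (bigD1 i) //= big1 ?addr0 => [|m /negbTE mi]; first by rewrite eqxx; ring.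
by rewrite mi /= mulr0n !mulr0.
Qed.

Lemma gram_mulmx_elem (k : M) i j (t : R) a b : k *m k^T = 1%:M ->
  let x := k *m (1%:M + t *: delta_mx i j) in
  (x *m x^T) a b =
  (a == b)%:R + t * (k a i * k b j + k a j * k b i) + t ^+ 2 * (k a i * k b i).
Proof.
move=> kk x; have kab : (k *m k^T) a b = (a == b)%:R by rewrite kk mxE.
rewrite mxE; under eq_bigr do rewrite [X in _ * X]mxE !mulmx_elem_entry.
rewrite (eq_bigr (fun l => k a l * k^T l b + (j == l)%:R *
   (t * (k a l * k b i + k a i * k b l) + t ^+ 2 * (k a i * k b i)))).
  by rewrite big_split /= sum_delta_mull -kab [(k *m _) a b]mxE; ring.
by move=> l _; rewrite mxE (eq_sym l j); case: (j == l) => /=; ring.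
Qed.

(* An orthogonal [k] such that every [k (1 + t E_ij)], [blk i < blk j], lies in
   [U O(N)] preserves the block flag: this is the uniqueness in the Iwasawa
   decomposition, read off the Gram matrices row by row, from the last block up. *)
Lemma orthomx_block_triu (k : M) : k *m k^T = 1%:M ->
  (forall i j (t : R), (blk i < blk j)%N ->
     exists2 v, block_unipotent v &
       let x := k *m (1%:M + t *: delta_mx i j) in x *m x^T = v *m v^T) ->
  forall r i, (blk i < blk r)%N -> k r i = 0.
Proof.
move=> kk kU; apply: blk_down_ind => r IH i ir.
have rr t : t * (k r i * k r r + k r r * k r i) + t ^+ 2 * (k r i * k r i) = 0.
  have [v vU xv] := kU i r t ir.
  have below s : (blk r < blk s)%N ->
      (v *m v^T) s s = 1 /\ (v *m v^T) r s = 0.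
    move=> rs; rewrite -xv !gram_mulmx_elem //.
    rewrite (IH s rs i) ?(IH s rs r) ?(ltn_trans ir rs) // eqxx (eq_sym r) eq_blk_lt //.
    by split; rewrite /= ?mulr1n ?mulr0n; ring.
  have := block_unipotent_gram_diag vU below.
  rewrite -xv gram_mulmx_elem // eqxx => e.
  by apply: (addrI 1); rewrite addr0 addrA.
have h1 := rr 1; have h2 := rr (-1).
have : k r i * k r i = 0 by lra.
by move/eqP; rewrite mulf_eq0 orbb => /eqP.
Qed.

Lemma det_block_unipotent (v : M) :
  (forall i j : 'I_N, (i <= j)%N -> (blk i <= blk j)%N) ->
  block_unipotent v -> \det v = 1.
Proof.
move=> blk_mono vU; rewrite -det_tr det_trig.
  by rewrite big1 // => i _; rewrite mxE (block_unipotent_triu blk_mono vU) ?eqxx.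
apply/forallP => i; apply/forallP => j; apply/implyP => ij.
by rewrite mxE (block_unipotent_triu blk_mono vU) ?(ltnW ij) // -val_eqE gtn_eqF.
Qed.

End BlockUnipotent.

Section Horospherical.
Context {R : realType} {N : nat} (blk : 'I_N -> nat).
Hypothesis blk_mono : forall i j : 'I_N, (i <= j)%N -> (blk i <= blk j)%N.
Local Notation M := 'M[R]_N.

Lemma U_I_elem i j (t : R) : (blk i < blk j)%N -> U_I blk (1%:M + t *: delta_mx i j).
Proof.
move=> ij; have vU : block_unipotent blk (1%:M + t *: delta_mx i j : M).
  move=> a b ba; rewrite !mxE.
  case: (a =P i) => [ai | _]; last by rewrite mulr0 addr0.
  case: (b =P j) => [bj | _]; last by rewrite andbF mulr0 addr0.
  by move: ba ij; rewrite ai bj => /leq_ltn_trans/[apply]; rewrite ltnn.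
by split=> //; apply: det_block_unipotent vU.
Qed.

(* [G_hor] fixes the base point [U K] of the horosphere, so [h = u k]; that
   [k] preserves the block flag follows from [h (1 + t E_ij) in U K]. *)
Lemma G_hor_decomp (h : M) : G_hor blk h ->
  exists u k, [/\ U_I blk u, SON k, h = u *m k &
                  forall r i, (blk i < blk r)%N -> k r i = 0].
Proof.
move=> [_ hUK].
have UK_U (g : M) : U_I blk g -> UK blk g.
  move=> gU; exists g, 1%:M; split=> //; rewrite mulmx1; split=> //.
  by split; rewrite ?trmx1 ?mulmx1 ?det1.
have hUK_UK y : UK blk y -> UK blk (h *m y) by move=> yUK; rewrite -hUK; exists y.
have [u [k [uU [kK eh]]]] : UK blk h.
  rewrite -[h]mulmx1; apply/hUK_UK/UK_U; split=> [|i j _]; first exact: det1.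
  by rewrite mxE.
exists u, k; split=> //.
have uu : u \in unitmx by rewrite unitmxE (proj1 uU) unitr1.
have kkT (k1 : M) : SON k1 -> k1 *m k1^T = 1%:M by move=> [/mulmx1C].
apply: (orthomx_block_triu (kkT _ kK)) => i j t ij.
have [u1 [k1 [u1U [k1K e1]]]] := hUK_UK _ (UK_U _ (U_I_elem t ij)).
exists (invmx u *m u1).
  exact: block_unipotent_mul (block_unipotent_inv (proj2 uU) uu) (proj2 u1U).
have -> : k *m (1%:M + t *: delta_mx i j) = invmx u *m u1 *m k1.
  by rewrite -mulmxA -e1 eh -!mulmxA mulKmx.
by rewrite /= !trmx_mul -!mulmxA (mulmxA k1) kkT // mul1mx.
Qed.

End Horospherical.

Section Diagonal.
Context {R : realType} {N : nat}.
Local Notation M := 'M[R]_N.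

Lemma is_diag_triu (a : M) : is_diag a -> forall p q : 'I_N, (q < p)%N -> a p q = 0.
Proof. by move=> aD p q qp; rewrite aD // -val_eqE gtn_eqF. Qed.

Lemma det_is_diag (a : M) : is_diag a -> \det a = \prod_i a i i.
Proof.
move=> aD; rewrite -det_tr det_trig; first by apply: eq_bigr => i _; rewrite mxE.
apply/forallP => i; apply/forallP => j; apply/implyP => ij.
by rewrite mxE is_diag_triu.
Qed.

Lemma diag_logE (a : M) i : diag_log a i i = ln (a i i).
Proof. by rewrite mxE eqxx. Qed.

End Diagonal.

Definition lead_stable {R : pzRingType} {N} d (g : 'M[R]_N) :=
  forall r i : 'I_N, (d <= r)%N -> (i < d)%N -> g r i = 0.

Lemma is_diag_lead_stable {R : realType} {N} d (g : 'M[R]_N) :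
  is_diag g -> lead_stable d g.
Proof. by move=> gD r i dr id; apply: gD; apply: contraTneq dr => ->; rewrite -ltnNge. Qed.

Section LeadingBlock.
Context {R : realType} {N d : nat} (dN : (d <= N)%N).
Local Notation M := 'M[R]_N.
Local Notation w := (widen_ord dN).

Definition lead_emb : 'M[R]_(N, d) := \matrix_(i, q) (i == w q)%:R.
Definition lead_block (g : M) : 'M[R]_d := \matrix_(p, q) g (w p) (w q).

Lemma lead_stable_mul (g1 g2 : M) :
  lead_stable d g1 -> lead_stable d g2 -> lead_stable d (g1 *m g2).
Proof.
move=> g1S g2S r i dr id; rewrite mxE big1 // => l _.
by case: (ltnP l d) => dl; [rewrite g1S ?mul0r | rewrite g2S ?mulr0].
Qed.

Lemma sum_lead (F : 'I_N -> R) : (forall l : 'I_N, (d <= l)%N -> F l = 0) ->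
  \sum_l F l = \sum_(p < d) F (w p).
Proof.
move=> F0; rewrite (bigID (fun l : 'I_N => (l < d)%N)) /= [X in _ + X]big1.
  by rewrite addr0 big_ord_narrow.
by move=> l; rewrite -leqNgt; apply: F0.
Qed.

Lemma mulmx_lead_emb (g : M) : lead_stable d g -> g *m lead_emb = lead_emb *m lead_block g.
Proof.
move=> gS; apply/matrixP => r q; rewrite !mxE.
under eq_bigr do rewrite mxE; rewrite sum_delta_mulr.
under eq_bigr do rewrite !mxE.
rewrite -(sum_lead (F := fun l => (r == l)%:R * g l (w q))) ?sum_delta_mull //.
by move=> l dl; rewrite (gS l (w q) dl (ltn_ord q)) mulr0.
Qed.

Lemma lead_block_mul (g1 g2 : M) :
  lead_stable d g2 -> lead_block (g1 *m g2) = lead_block g1 *m lead_block g2.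
Proof.
move=> g2S; apply/matrixP => p q; rewrite !mxE (sum_lead (F := fun l => g1 (w p) l * g2 l (w q))).
  by apply: eq_bigr => l _; rewrite !mxE.
by move=> l dl; rewrite (g2S l (w q) dl (ltn_ord q)) mulr0.
Qed.

Lemma det_lead_block_orthomx (k : M) :
  k^T *m k = 1%:M -> lead_stable d k -> `|\det (lead_block k)| = 1.
Proof.
move=> kk kS.
have : (lead_block k)^T *m lead_block k = 1%:M.
  apply/matrixP => p q; rewrite !mxE -[RHS](_ : (k^T *m k) (w p) (w q) = _); last first.
    by rewrite kk mxE.
  rewrite [RHS]mxE (sum_lead (F := fun l => k^T (w p) l * k l (w q))).
    by apply: eq_bigr => l _; rewrite !mxE.
  by move=> l dl; rewrite mxE (kS l (w p) dl (ltn_ord p)) mul0r.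
move/(congr1 determinant); rewrite det_mulmx det_tr det1 -expr2 => e.
by apply/eqP; rewrite -sqrp_eq1 // real_normK ?num_real // e.
Qed.

Lemma det_lead_block_triu (g : M) : (forall p q : 'I_N, (q < p)%N -> g p q = 0) ->
  \det (lead_block g) = \prod_(p < d) g (w p) (w p).
Proof.
move=> gU; rewrite -det_tr det_trig.
  by apply: eq_bigr => p _; rewrite !mxE.
by apply/forallP => p; apply/forallP => q; apply/implyP => pq; rewrite !mxE gU.
Qed.

Lemma det_rowsub_lead_emb_le (k : M) (f : 'I_d -> 'I_N) :
  k^T *m k = 1%:M -> `|\det (rowsub f (k *m lead_emb))| <= d`!%:R.
Proof.
move=> kk; have := @det_normr_le _ d (rowsub f (k *m lead_emb)) 1.
rewrite expr1n mulr1; apply=> p q; rewrite !mxE.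
under eq_bigr do rewrite mxE; rewrite sum_delta_mulr.
exact: orthomx_entry_le1.
Qed.

Lemma lead_emb_mxOver : lead_emb \is a mxOver Num.int.
Proof. by apply/mxOverP => i q; rewrite mxE natr_int. Qed.

Lemma nondeg_lead_emb : nondeg lead_emb.
Proof.
exists w; suff -> : rowsub w lead_emb = 1%:M by rewrite det1 oner_neq0.
by apply/matrixP => p q; rewrite !mxE -val_eqE /= val_eqE.
Qed.

End LeadingBlock.

Section Cone.
Context {R : realType} {N : nat} (blk : 'I_N -> nat).
Local Notation M := 'M[R]_N.

Lemma tr_diag_log (a : M) : is_diag a -> (forall i, 0 < a i i) -> \det a = 1 ->
  \tr (diag_log a) = 0.
Proof.
move=> aD a0 a1; apply: expR_inj; rewrite expR0 /mxtrace expR_sum -[RHS]a1 det_is_diag //.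
by apply: eq_bigr => i _; rewrite diag_logE lnK ?posrE.
Qed.

Lemma blk_lt_nblocks i : (blk i < nblocks blk)%N.
Proof. by rewrite ltnS; apply: (leq_bigmax i). Qed.

Lemma Aplus_M_det (a : M) : Aplus_M blk a -> \det a = 1.
Proof.
move=> [aD [_ [a1 _]]]; rewrite det_is_diag //.
rewrite (partition_big (fun i => Ordinal (blk_lt_nblocks i)) xpredT) //=.
by apply: big1 => k _; rewrite -[RHS](a1 k); apply: eq_bigl => i; rewrite -val_eqE.
Qed.

Lemma not_cone_C_partial_sum (a b : M) (C : R) : C < 0 ->
  Aplus_M blk a -> A_I blk b -> ~ cone_C blk C (diag_log a + diag_log b) ->
  exists k0, \sum_(i | (blk i < k0)%N) (diag_log a + diag_log b) i i < C.
Proof.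
move=> C0 aA bA; have [aD [a0 [_ a_mono]]] := aA; have [bD [b0 [b1 b_blk]]] := bA.
apply: contra_notP => /forallNP sums_ge; split; [|split; [|split]].
- by move=> i j ij; rewrite !mxE (negbTE ij) addr0.
- by rewrite mxtraceD !tr_diag_log ?addr0 //; exact: Aplus_M_det aA.
- move=> i j ij bij; rewrite max_l ?(ltW C0) // !mxE !eqxx (b_blk i j bij) subr_ge0.
  by rewrite lerD2r ler_ln ?posrE // a_mono.
- by move=> k0 _; rewrite leNgt; apply/negP/sums_ge.
Qed.

Lemma consecutive_blocks_mono : consecutive_blocks blk ->
  forall i j : 'I_N, (i <= j)%N -> (blk i <= blk j)%N.
Proof. by move=> [_ blk_cons] i j ij; case/andP: (blk_cons i j ij). Qed.

Lemma blk_prefix : (forall i j : 'I_N, (i <= j)%N -> (blk i <= blk j)%N) ->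
  forall k0, exists2 d, (d <= N)%N & forall i : 'I_N, (i < d)%N = (blk i < k0)%N.
Proof.
move=> blk_mono k0; case: (pselect (exists i : 'I_N, ~~ (blk i < k0)%N)) => [[i0 i0k0]|].
  case: (@arg_minnP _ i0 (fun i => ~~ (blk i < k0)%N) val i0k0) => i1 i1k0 i1min.
  exists i1; first exact: ltnW (ltn_ord i1).
  move=> j; apply/idP/idP => [ji1|jk0].
    by apply: contraTT ji1 => /i1min; rewrite -leqNgt.
  by rewrite ltnNge; apply: contra i1k0 => /blk_mono /leq_ltn_trans; apply.
move=> /forallNP all_lt; exists N => // i; rewrite ltn_ord; apply/esym/negbNE/negP.
exact: all_lt.
Qed.

End Cone.

Section FlagMinors.
Context {R : realType} {N : nat} (blk : 'I_N -> nat).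
Hypothesis blk_mono : forall i j : 'I_N, (i <= j)%N -> (blk i <= blk j)%N.
Local Notation M := 'M[R]_N.

Lemma lead_prod_expR d (dN : (d <= N)%N) (a : M) : (forall i, 0 < a i i) ->
  \prod_(p < d) a (widen_ord dN p) (widen_ord dN p) =
  expR (\sum_(i : 'I_N | (i < d)%N) diag_log a i i).
Proof.
move=> a0; rewrite expR_sum (big_ord_narrow dN).
by apply: eq_bigr => p _; rewrite diag_logE lnK ?posrE.
Qed.

Lemma G_hor_lead_decomp d (dN : (d <= N)%N) (h : M) :
  (forall r i : 'I_N, (d <= r)%N -> (i < d)%N -> (blk i < blk r)%N) ->
  G_hor blk h -> exists u k,
    [/\ h = u *m k, lead_stable d u, \det (lead_block dN u) = 1, SON k & lead_stable d k].
Proof.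
move=> bd hh; have [u [k [uU kK -> kT]]] := G_hor_decomp blk_mono hh.
exists u, k; split=> // [r i dr id||r i dr id]; last exact/kT/bd.
- by rewrite (proj2 uU) ?(eq_blk_lt (bd r i dr id)) // ltnW ?bd.
- rewrite det_lead_block_triu => [|p q qp].
    by rewrite big1 // => p _; rewrite (proj2 uU) ?eqxx.
  by rewrite (block_unipotent_triu blk_mono (proj2 uU)) 1?ltnW // -val_eqE gtn_eqF.
Qed.

(* [G_hor] preserves the span of the first [d] coordinate vectors, so [x V]
   spans [k] of that subspace, with volume scaled by the leading entries. *)
Lemma minor_le_expR_partial_sum d (dN : (d <= N)%N) k0 (k a b h : M)
    (f : 'I_d -> 'I_N) :
  (forall i : 'I_N, (i < d)%N = (blk i < k0)%N) ->
  SON k -> is_diag a -> (forall i, 0 < a i i) -> is_diag b -> (forall i, 0 < b i i) ->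
  G_hor blk h ->
  `|\det (rowsub f (k *m a *m b *m h *m lead_emb dN))| <=
  d`!%:R * expR (\sum_(i | (blk i < k0)%N) (diag_log a + diag_log b) i i).
Proof.
move=> dk0 kK aD a0 bD b0 hh.
have bd (r i : 'I_N) : (d <= r)%N -> (i < d)%N -> (blk i < blk r)%N.
  by rewrite leqNgt !dk0 -leqNgt => /[swap] /leq_trans; apply.
have [u [k' [-> uS det_u k'K k'S]]] := G_hor_lead_decomp dN bd hh.
have abS : lead_stable d (a *m b).
  exact: lead_stable_mul (is_diag_lead_stable aD) (is_diag_lead_stable bD).
have abukS := lead_stable_mul (lead_stable_mul abS uS) k'S.
have -> : k *m a *m b *m (u *m k') *m lead_emb dN =
    k *m lead_emb dN *m lead_block dN (a *m b *m u *m k').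
  by rewrite -[RHS]mulmxA -mulmx_lead_emb // !mulmxA.
rewrite -mul_rowsub_mx det_mulmx normrM !lead_block_mul //; last first.
  exact: is_diag_lead_stable.
rewrite !det_mulmx !normrM (det_lead_block_orthomx dN (proj1 k'K) k'S) det_u normr1 !mulr1.
rewrite (det_lead_block_triu dN (is_diag_triu aD)) (det_lead_block_triu dN (is_diag_triu bD)).
rewrite (lead_prod_expR dN a0) (lead_prod_expR dN b0) !(ger0_norm (expR_ge0 _)) -expRD.
rewrite [X in _ <= _ * expR X](eq_bigl (fun i : 'I_N => (i < d)%N)) => [|i]; last first.
  by rewrite dk0.
rewrite -big_split /= (eq_bigr (fun i => (diag_log a + diag_log b) i i)) => [|i _].
  by apply: ler_wpM2r; [exact: expR_ge0 | exact: det_rowsub_lead_emb_le (proj1 kK)].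
by rewrite !mxE.
Qed.

End FlagMinors.

Lemma conj_sub_le {R : realType} {N : nat} (Gam Gam' : set 'M[R]_N) q :
  is_subgroup Gam -> Gam' `<=` Gam -> Gam q -> conj_sub Gam' q `<=` Gam.
Proof.
move=> [_ [_ [Gammul Gaminv]]] Gam'Gam Gamq _ [g [Gam'g ->]].
exact/Gammul/Gamq/Gammul/Gam'Gam/Gam'g/Gaminv.
Qed.

Unset Implicit Arguments.

Theorem lemma4p12 (R : realType) (N : nat) (hN : (2 <= N)%N)
  (blk : 'I_N -> nat) (hblk : consecutive_blocks blk)
  (Gam Gam' : set 'M[R]_N) (q : 'M[R]_N)
  (hGam : is_subgroup Gam) (hcomm : commensurable_SLNZ Gam)
  (hGam' : is_subgroup Gam') (hsub : Gam' `<=` Gam)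
  (hfin : finite_index Gam' Gam) (hneat : neat Gam') (hq : Gam q)
  (B : set 'M[R]_N) (hB : quot_compact (conj_sub Gam' q) B) :
  exists C : R, C < 0 /\
    forall k a b : 'M[R]_N, SON k -> Aplus_M blk a -> A_I blk b ->
      ~ cone_C blk C (diag_log a + diag_log b) ->
      forall h, G_hor blk h -> ~ B (k *m a *m b *m h).
Proof.
(* Neither [N >= 2] nor the finite index and neatness of [Gam'] are needed. *)
have blk_mono := consecutive_blocks_mono hblk.
have [n Bn] := quot_compact_minor_bounded hGam (proj1 hcomm) (conj_sub_le hGam hsub hq) hB.
pose P : R := n.+2%:R * N`!%:R.
have P0 : 0 < P by rewrite mulr_gt0 ?ltr0n ?fact_gt0.
have C0 : - ln P < 0.
  by rewrite oppr_lt0 ln_gt0 // /P -natrM ltr1n (leq_trans _ (leq_pmulr _ (fact_gt0 N))).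
exists (- ln P); split=> // k a b kK aA bA not_cone h hh Bx.
have [k0 sum_lt] := not_cone_C_partial_sum C0 aA bA not_cone.
have [d dN dk0] := blk_prefix blk_mono k0.
have [f minor_ge] := Bn _ Bx (proj1 hB _ Bx) d dN _ (lead_emb_mxOver dN) (nondeg_lead_emb dN).
have [[aD [a0 _]] [bD [b0 _]]] := (aA, bA).
have minor_le := minor_le_expR_partial_sum blk_mono dN f dk0 kK aD a0 bD b0 hh.
have fact0 : 0 < N`!%:R :> R by rewrite ltr0n fact_gt0.
have bound : N`!%:R * expR (- ln P) = n.+2%:R^-1.
  by rewrite expRN lnK ?posrE // invfM mulrCA mulfV ?gt_eqF // mulr1.
have : n.+1%:R^-1 < n.+2%:R^-1 :> R.
  rewrite -bound; apply: le_lt_trans minor_ge (le_lt_trans minor_le _).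
  have fact_le : d`!%:R <= N`!%:R :> R by rewrite ler_nat leq_fact.
  apply: le_lt_trans (ler_wpM2r (expR_ge0 _) fact_le) _.
  by rewrite ltr_pM2l // ltr_expR.
by rewrite ltf_pV2 ?posrE ?ltr0n // ltr_nat ltnNge leqnSn.
Qed.
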